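(* Let $X$ be an irreducible affine variety over $\mathbb{C}$, $\mathcal{F}$ an algebraic foliation on $X$, and $F$ a finite-dimensional $\mathbb{C}$-vector subspace of $\mathcal{O}_X$. Then the map $\varphi_F:X\to\mathbb{N}$, $\varphi_F(x)=\dim_{\mathbb{C}}F-\dim_{\mathbb{C}}(I(\mathcal{F},x)\cap F)$, is lower semi-continuous for the Zariski topology, i.e. $\varphi_F^{-1}([0,r])$ is Zariski closed for every $r$.
   Context: $\mathcal{O}_X$ is the ring of regular functions on $X$; an algebraic foliation $\mathcal{F}$ is a collection of $\mathbb{C}$-derivations of $\mathcal{O}_X$ stable under Lie bracket. For $x\in X$, $I(\mathcal{F},x)$ is the largest ideal $I$ of $\mathcal{O}_X$ contained in the maximal ideal of $x$ with $\partial(I)\subseteq I$ for all $\partial\in\mathcal{F}$. *)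

From mathcomp Require Import all_boot all_algebra complex reals.
Set Implicit Arguments. Unset Strict Implicit. Unset Printing Implicit Defensive.
Import GRing.Theory.
Local Open Scope ring_scope.

Section Defs.
Variable C : fieldType.
Variable A : comAlgType C.

Inductive in_subalg (gens : seq A) : A -> Prop :=
  | subalg_gen a : a \in gens -> in_subalg gens a
  | subalg_scal (c : C) : in_subalg gens (c%:A)
  | subalg_add a b : in_subalg gens a -> in_subalg gens b -> in_subalg gens (a + b)
  | subalg_mul a b : in_subalg gens a -> in_subalg gens b -> in_subalg gens (a * b).

(* A is a finitely generated C-algebra which is an integral domain:
   the coordinate ring O_X of an irreducible affine variety X over C. *)
Definition irred_affine_coord_ring : Prop :=
  [/\ (1 : A) != 0,
      (forall a b : A, a * b = 0 -> a = 0 \/ b = 0)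
    & exists gens : seq A, forall a, in_subalg gens a].

(* The points of X: C-algebra homomorphisms O_X -> C
   (equivalently, by the Nullstellensatz, the maximal ideals of O_X). *)
Definition is_point (x : A -> C) : Prop :=
  [/\ forall a b, x (a + b) = x a + x b,
      forall a b, x (a * b) = x a * x b,
      forall (c : C) a, x (c *: a) = c * x a
    & x 1 = 1].

Definition max_ideal (x : A -> C) : A -> Prop := fun f => x f = 0.

Definition is_derivation (d : A -> A) : Prop :=
  [/\ forall a b, d (a + b) = d a + d b,
      forall (c : C) a, d (c *: a) = c *: d a
    & forall a b, d (a * b) = a * d b + d a * b].

Definition lie_bracket (d1 d2 : A -> A) : A -> A := fun a => d1 (d2 a) - d2 (d1 a).

Definition is_foliation (F : (A -> A) -> Prop) : Prop :=
  (forall d, F d -> is_derivation d) /\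
  (forall d1 d2, F d1 -> F d2 -> F (lie_bracket d1 d2)).

Definition is_ideal (I : A -> Prop) : Prop :=
  [/\ I 0, (forall a b, I a -> I b -> I (a + b)) & (forall a b, I b -> I (a * b))].

(* I(F, x): the largest ideal contained in m_x stable under every d in F,
   realised as the union of all such ideals (which is itself such an ideal). *)
Definition I_fol (F : (A -> A) -> Prop) (x : A -> C) : A -> Prop :=
  fun f => exists I : A -> Prop,
    [/\ is_ideal I, (forall g, I g -> max_ideal x g),
        (forall d g, F d -> I g -> I (d g)) & I f].

Definition is_subspace (V : A -> Prop) : Prop :=
  [/\ V 0, (forall a b, V a -> V b -> V (a + b)) & (forall (c : C) a, V a -> V (c *: a))].

Definition lin_indep n (v : 'I_n -> A) : Prop :=
  forall c : 'I_n -> C, \sum_(i < n) c i *: v i = 0 -> forall i, c i = 0.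

Definition spans (V : A -> Prop) n (v : 'I_n -> A) : Prop :=
  forall a, V a <-> exists c : 'I_n -> C, a = \sum_(i < n) c i *: v i.

Definition has_dim (V : A -> Prop) (d : nat) : Prop :=
  exists v : 'I_d -> A, lin_indep v /\ spans V v.

Definition zariski_closed (Z : (A -> C) -> Prop) : Prop :=
  exists S : A -> Prop, forall x, is_point x -> (Z x <-> forall f, S f -> x f = 0).

End Defs.

(* Fix a basis v of F.  The largest Fol-stable ideal inside m_x consists of
   the f with x (w (g f)) = 0 for every g and every word w in Fol, so
   sum_i c_i v_i lies in I(Fol, x) iff c is orthogonal to all the evaluation
   rows (x (w (g v_i)))_i.  Hence phi_F(x) is the rank of the set of evaluation
   rows, and phi_F(x) <= r iff all the (r+1)-minors det (x (w_a (g_a v_(s b))))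
   vanish.  These are the values at x of the regular functions
   det (w_a (g_a v_(s b))), which therefore cut out the sublevel set. *)
From mathcomp Require Import all_boot all_algebra complex reals.
From Stdlib Require Import Classical.
Set Implicit Arguments. Unset Strict Implicit. Unset Printing Implicit Defensive.
Import GRing.Theory.
Local Open Scope ring_scope.

Section Words.
Variables (C : fieldType) (A : comAlgType C).

(* A word [:: d1; ...; dk] acts as the composite d1 \o ... \o dk. *)
Definition apply_word (w : seq (A -> A)) (a : A) : A := foldr (fun d b => d b) a w.

Fixpoint all_in (P : (A -> A) -> Prop) (w : seq (A -> A)) : Prop :=
  if w is d :: w' then P d /\ all_in P w' else True.

Lemma apply_word_rcons w d a : apply_word (rcons w d) a = apply_word w (d a).
Proof. by elim: w => //= d' w ->. Qed.

Lemma all_in_rcons P w d : all_in P w -> P d -> all_in P (rcons w d).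
Proof. by elim: w => [|d' w IH] //= [Pd' Pw] Pd; split => //; apply: IH. Qed.

Lemma derivation0 d : @is_derivation C A d -> d 0 = 0.
Proof. by case=> dD _ _; apply/(addrI (d 0)); rewrite -dD !addr0. Qed.

Variables (P : (A -> A) -> Prop) (w : seq (A -> A)).
Hypotheses (P_der : forall d, P d -> @is_derivation C A d) (Pw : all_in P w).

Lemma apply_wordD a b : apply_word w (a + b) = apply_word w a + apply_word w b.
Proof. by elim: w Pw => [|d w' IH] //= [/P_der[dD _ _] /IH ->]. Qed.

Lemma apply_wordZ (c : C) a : apply_word w (c *: a) = c *: apply_word w a.
Proof. by elim: w Pw => [|d w' IH] //= [/P_der[_ dZ _] /IH ->]. Qed.

Lemma apply_word0 : apply_word w 0 = 0.
Proof. by elim: w Pw => [|d w' IH] //= [/P_der/derivation0 d0 /IH ->]. Qed.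

Lemma apply_word_sum n (f : 'I_n -> A) :
  apply_word w (\sum_i f i) = \sum_i apply_word w (f i).
Proof. exact: (big_morph _ apply_wordD apply_word0). Qed.

End Words.

Section Points.
Variables (C : fieldType) (A : comAlgType C) (x : A -> C).
Hypothesis x_pt : is_point x.

Lemma point0 : x 0 = 0.
Proof. by case: x_pt => xD _ _ _; apply/(addrI (x 0)); rewrite -xD !addr0. Qed.

Lemma point_sum (I : finType) (f : I -> A) : x (\sum_i f i) = \sum_i x (f i).
Proof. by case: x_pt => xD _ _ _; apply: (big_morph _ xD point0). Qed.

Lemma point_prod (I : finType) (f : I -> A) : x (\prod_i f i) = \prod_i x (f i).
Proof. by case: x_pt => _ xM _ x1; apply: (big_morph _ xM x1). Qed.

Lemma pointN1 : x (-1) = -1.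
Proof.
case: x_pt => xD _ _ x1; apply/(addrI 1).
by rewrite -{1}x1 -xD !subrr point0.
Qed.

Lemma point_det n (M : 'M[A]_n) : x (\det M) = \det (map_mx x M).
Proof.
rewrite /determinant point_sum; apply: eq_bigr => s _.
case: x_pt => _ xM _ x1; rewrite xM point_prod.
congr (_ * _); last by apply: eq_bigr => i _; rewrite mxE.
by case: (perm.odd_perm s); rewrite ?expr0 ?expr1 ?pointN1.
Qed.

End Points.

Section StableCore.
Variables (C : fieldType) (A : comAlgType C) (Fol : (A -> A) -> Prop) (x : A -> C).
Hypotheses (Fol_der : forall d, Fol d -> is_derivation d) (x_pt : is_point x).

(* The right-hand side is itself a Fol-stable ideal inside m_x (stability by
   the Leibniz rule), and it contains every such ideal. *)
Lemma I_folE f :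
  I_fol Fol x f <-> forall g w, all_in Fol w -> x (apply_word w (g * f)) = 0.
Proof.
have [xD _ _ _] := x_pt.
split=> [[I [[_ _ IM] Imax Istab If]] g w Fw|Jf].
  apply: Imax; elim: w Fw => [_|d w IH [Fd Fw]] /=; first exact: IM.
  by apply: Istab => //; apply: IH.
exists (fun f => forall g w, all_in Fol w -> x (apply_word w (g * f)) = 0).
split=> //.
- split=> [g w Fw|a b Ja Jb g w Fw|a b Jb g w Fw].
  + by rewrite mulr0 (apply_word0 Fol_der) // point0.
  + by rewrite mulrDr (apply_wordD Fol_der) // xD Ja // Jb // addr0.
  + by rewrite mulrA; apply: Jb.
- by move=> g /(_ 1 [::] I); rewrite mul1r.
- move=> d g Fd Jg g' w Fw; have [_ _ dM] := Fol_der Fd.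
  have := Jg g' (rcons w d) (all_in_rcons Fw Fd).
  by rewrite apply_word_rcons dM (apply_wordD Fol_der) // xD Jg // addr0.
Qed.

End StableCore.

Section Coordinates.
Variables (C : fieldType) (A : comAlgType C) (n : nat) (v : 'I_n -> A).
Hypothesis v_free : lin_indep v.

Definition comb (c : 'rV[C]_n) : A := \sum_i c 0 i *: v i.

Lemma comb0 : comb 0 = 0.
Proof. by rewrite /comb big1 // => i _; rewrite mxE scale0r. Qed.

Lemma comb_row (c : 'I_n -> C) : comb (\row_i c i) = \sum_i c i *: v i.
Proof. by apply: eq_bigr => i _; rewrite mxE. Qed.

Lemma comb_inj : injective comb.
Proof.
move=> c1 c2 eq_c; apply/rowP => i.
have : \sum_k (c1 0 k - c2 0 k) *: v k = 0.
  by under eq_bigr do rewrite scalerBl; rewrite sumrB -/(comb c1) eq_c subrr.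
by move/v_free/(_ i)/eqP; rewrite subr_eq0 => /eqP.
Qed.

Lemma comb_mul m (a : 'rV[C]_m) (U : 'M[C]_(m, n)) :
  comb (a *m U) = \sum_j a 0 j *: comb (row j U).
Proof.
rewrite /comb; under eq_bigr do rewrite mxE scaler_suml.
rewrite exchange_big /=; apply: eq_bigr => j _.
by rewrite scaler_sumr; apply: eq_bigr => i _; rewrite !mxE scalerA.
Qed.

Variables (K : 'M[C]_n) (V : A -> Prop).
Hypothesis V_comb : forall f, V f <-> exists2 c, (c <= K)%MS & f = comb c.

Lemma has_dim_rank : has_dim V (\rank K).
Proof.
pose B := row_base K.
exists (fun j => comb (row j B)); split.
  move=> c c0; suff /rowP/(_ _) cB : \row_j c j = 0.
    by move=> i; have := cB i; rewrite !mxE.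
  apply: (row_free_inj (row_base_free K)); apply: comb_inj.
  by rewrite mul0mx comb0 comb_mul -[RHS]c0; apply: eq_bigr => j _; rewrite mxE.
move=> f; split.
  case/V_comb => c; rewrite -(eq_row_base K) => /submxP[D ->] ->.
  by exists (fun j => D 0 j); apply: comb_mul.
case=> a ->; apply/V_comb; exists ((\row_j a j) *m B).
  by rewrite -(eq_row_base K) submxMl.
by rewrite comb_mul; apply: eq_bigr => j _; rewrite mxE.
Qed.

Lemma has_dim_eq_rank d : has_dim V d -> d = \rank K.
Proof.
case=> u [u_free u_span].
have Vu j : V (u j).
  apply/u_span; exists (fun k => (k == j)%:R).
  rewrite (bigD1 j) //= eqxx scale1r big1 ?addr0 // => k /negbTE ->.
  by rewrite scale0r.
have /fin_all_exists[U UK] : forall j, exists c, (c <= K)%MS /\ u j = comb c.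
  by move=> j; have /V_comb[c] := Vu j; exists c.
pose Um := \matrix_j U j.
have combU (a : 'rV[C]_d) : comb (a *m Um) = \sum_j a 0 j *: u j.
  by rewrite comb_mul; apply: eq_bigr => j _; rewrite rowK (proj2 (UK j)).
have Um_free : row_free Um.
  apply: inj_row_free => a a0; apply/rowP => j; rewrite mxE.
  by apply: (u_free (fun j => a 0 j)); rewrite -combU a0 comb0.
have UmK : (Um <= K)%MS by apply/row_subP => j; rewrite rowK; case: (UK j).
have KUm : (K <= Um)%MS.
  apply/row_subP => k.
  have /u_span[a Ka] : V (comb (row k K)) by apply/V_comb; exists (row k K); rewrite ?row_sub.
  suff -> : row k K = (\row_j a j) *m Um by apply: submxMl.
  by apply: comb_inj; rewrite Ka combU; apply: eq_bigr => j _; rewrite mxE.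
by rewrite -(eqP Um_free); apply/eqmx_rank/andP.
Qed.

End Coordinates.

Lemma bounded_ex_max (P : nat -> Prop) b :
  P 0%N -> (forall k, P k -> (k <= b)%N) ->
  exists k, P k /\ forall k', P k' -> (k' <= k)%N.
Proof.
move=> P0; elim: b => [|b IH] Pb; first by exists 0%N; split=> // k /Pb.
have [Pb1|nPb1] := classic (P b.+1); first by exists b.+1.
by apply: IH => k Pk; move: (Pb k Pk); rewrite leq_eqVlt => /predU1P[k_eq|//]; subst.
Qed.

Section RowSets.
Variables (C : fieldType) (n : nat) (S : 'rV[C]_n -> Prop).

Definition rows_in k (M : 'M[C]_(k, n)) := forall j, S (row j M).

Definition spanning_basis k (M : 'M[C]_(k, n)) :=
  [/\ rows_in M, row_free M & forall r, S r -> (r <= M)%MS].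

(* Take a free matrix with rows in S with the largest possible number of rows;
   a row of S outside its row space would give a larger one. *)
Lemma exists_spanning_basis : exists k (M : 'M[C]_(k, n)), spanning_basis M.
Proof.
pose P k := exists M : 'M[C]_(k, n), rows_in M /\ row_free M.
have [k [[M [MS Mfree]] kmax]] : exists k, P k /\ forall k', P k' -> (k' <= k)%N.
  apply: (@bounded_ex_max _ n); first by exists 0; split=> [[]|]; rewrite -?row_leq_rank.
  by move=> k [M [_]]; rewrite -row_leq_rank => /leq_trans; apply; apply: rank_leq_col.
exists k, M; split=> // r Sr; apply: contraT => rM.
suff /kmax : P (k + 1)%N by rewrite addn1 ltnn.
exists (col_mx M r); split.
  move=> j; rewrite -(splitK j); case: (split j) => j' /=; first by rewrite rowKu.
  by rewrite rowKd (_ : row j' r = r) //; apply/rowP => i; rewrite !mxE (ord1 j').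
have M_lt : (M < col_mx M r)%MS.
  by rewrite ltmxE -addsmxE addsmxSl /= -addsmxE addsmx_sub submx_refl.
by rewrite -row_leq_rank; apply: leq_trans (rank_ltmx M_lt); rewrite (eqP Mfree) addn1.
Qed.

Variables (k : nat) (M : 'M[C]_(k, n)).
Hypothesis M_basis : spanning_basis M.

Lemma spanning_basis_rank : \rank M = k.
Proof. by case: M_basis => _ /eqP. Qed.

Lemma spanning_basis_leq k' (N : 'M[C]_(k', n)) : rows_in N -> (\rank N <= k)%N.
Proof.
case: M_basis => _ _ MS NS; rewrite -spanning_basis_rank; apply: mxrankS.
by apply/row_subP => j; apply: MS.
Qed.

Lemma spanning_basis_minors r :
  (k <= r)%N <->
  forall (N : 'M[C]_(r.+1, n)) (s : 'I_r.+1 -> 'I_n),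
    rows_in N -> \det (colsub s N) = 0.
Proof.
split=> [kr N s NS|minors0].
  apply/eqP; apply: contraTT kr => /negbTE det_s; rewrite -ltnNge.
  have : colsub s N \in unitmx by rewrite unitmxE unitfE det_s.
  rewrite -row_free_unit -row_leq_rank => /leq_trans; apply.
  rewrite (leq_trans _ (spanning_basis_leq NS)) //.
  have -> : colsub s N = N *m colsub s 1%:M by rewrite mulmx_colsub mulmx1.
  exact: mxrankM_maxl.
rewrite leqNgt; apply/negP => rk.
have [MS Mfree _] := M_basis.
pose f := widen_ord rk; pose N := rowsub f M.
have Nfree : row_free N.
  apply/row_freeP; exists (pinvmx M *m colsub f 1%:M).
  rewrite mulmxA mul_rowsub_mx mulmxVp // -mxsub_mul mulmx1.
  by apply/matrixP => a b; rewrite !mxE.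
have NT_full : row_full N^T by rewrite -col_leq_rank mxrank_tr row_leq_rank.
have := fullrowsub_unit NT_full; rewrite unitmxE -[rowsub _ _]trmxK trmx_mxsub det_tr.
by rewrite trmxK minors0 ?unitr0 // => j; rewrite row_rowsub.
Qed.

End RowSets.

Section EvaluationRows.
Variables (C : fieldType) (A : comAlgType C) (Fol : (A -> A) -> Prop).
Variables (n : nat) (v : 'I_n -> A).

Definition word_minor m (gs : 'I_m -> A) (ws : 'I_m -> seq (A -> A)) (s : 'I_m -> 'I_n) :=
  \det (\matrix_(a, b) apply_word (ws a) (gs a * v (s b))).

Definition word_minors (r : nat) (f : A) :=
  exists gs ws (s : 'I_r.+1 -> 'I_n),
    (forall a, all_in Fol (ws a)) /\ f = word_minor gs ws s.

Variable x : A -> C.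
Hypotheses (Fol_der : forall d, Fol d -> is_derivation d) (x_pt : is_point x).

Definition eval_row g w : 'rV[C]_n := \row_i x (apply_word w (g * v i)).

Definition eval_rows (r : 'rV[C]_n) := exists g w, all_in Fol w /\ r = eval_row g w.

Lemma point_word_minor m gs ws (s : 'I_m -> 'I_n) :
  x (word_minor gs ws s) = \det (colsub s (\matrix_a eval_row (gs a) (ws a))).
Proof. by rewrite point_det //; congr (\det _); apply/matrixP => a b; rewrite !mxE. Qed.

Lemma point_word_comb g w c : all_in Fol w ->
  x (apply_word w (g * comb v c)) = (eval_row g w *m c^T) 0 0.
Proof.
move=> Fw; have [_ _ xZ _] := x_pt.
rewrite mulr_sumr (apply_word_sum Fol_der) // point_sum // mxE.
apply: eq_bigr => i _; rewrite -scalerAr (apply_wordZ Fol_der) //.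
by rewrite xZ !mxE mulrC.
Qed.

Lemma I_fol_comb c :
  I_fol Fol x (comb v c) <-> forall r, eval_rows r -> r *m c^T = 0.
Proof.
rewrite I_folE //; split=> [Jc _ [g [w [Fw ->]]]|c_orth g w Fw].
  by apply/rowP => i; rewrite (ord1 i) [RHS]mxE -point_word_comb // Jc.
by rewrite point_word_comb // c_orth ?mxE //; exists g, w.
Qed.

Variables (k : nat) (M : 'M[C]_(k, n)).
Hypothesis M_basis : spanning_basis eval_rows M.

Lemma rank_leq_iff_word_minors r :
  (k <= r)%N <-> forall f, word_minors r f -> x f = 0.
Proof.
apply: iff_trans (spanning_basis_minors M_basis r) _.
split=> [minors0 f [gs [ws [s [Fws ->]]]]|minors0 N s NS].
  by rewrite point_word_minor; apply: minors0 => a; rewrite rowK; exists (gs a), (ws a).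
have /fin_all_exists[gs /fin_all_exists[ws gws]] := NS.
suff -> : N = \matrix_a eval_row (gs a) (ws a).
  by rewrite -point_word_minor minors0 //; exists gs, ws, s; split=> // a; case: (gws a).
by apply/row_matrixP => a; rewrite rowK; case: (gws a).
Qed.

Variable F : A -> Prop.
Hypotheses (v_free : lin_indep v) (v_span : spans F v).

Lemma I_fol_capE f :
  I_fol Fol x f /\ F f <-> exists2 c, (c <= kermx M^T)%MS & f = comb v c.
Proof.
have [M_rows _ M_span] := M_basis.
have c_kerE c : (c <= kermx M^T)%MS <-> forall r, eval_rows r -> r *m c^T = 0.
  rewrite sub_kermx -(inj_eq (@trmx_inj _ _ _)) trmx_mul trmxK trmx0.
  split=> [/eqP Mc r /M_span/submxP[D ->]|c_orth]; first by rewrite -mulmxA Mc mulmx0.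
  by apply/eqP/row_matrixP => j; rewrite row_mul row0; apply/c_orth/M_rows.
split=> [[If /v_span[c f_c]]|[c /c_kerE c_orth ->]].
  by exists (\row_i c i); rewrite ?comb_row //; apply/c_kerE/I_fol_comb; rewrite comb_row -f_c.
by split; [apply/I_fol_comb | apply/v_span; exists (c 0); apply: eq_bigr].
Qed.

Lemma has_dim_I_fol_capE d :
  has_dim (fun f => I_fol Fol x f /\ F f) d <-> d = (n - k)%N.
Proof.
have rankE : \rank (kermx M^T) = (n - k)%N.
  by rewrite mxrank_ker mxrank_tr (spanning_basis_rank M_basis).
have V_comb := I_fol_capE.
rewrite -rankE; split=> [|->]; first exact: (has_dim_eq_rank v_free V_comb).
exact: (has_dim_rank v_free V_comb).
Qed.

End EvaluationRows.

Theorem zariski_closed_I_fol_codim_le (C : fieldType) (A : comAlgType C)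
  (Fol : (A -> A) -> Prop) (hFol : is_foliation Fol)
  (F : A -> Prop) (dF : nat) (hdF : has_dim F dF) (r : nat) :
  zariski_closed (fun x : A -> C =>
    exists d : nat, has_dim (fun f => I_fol Fol x f /\ F f) d /\ (dF - d <= r)%N).
Proof.
have [v [v_free v_span]] := hdF.
exists (word_minors Fol v r) => x x_pt.
have [k [M M_basis]] := exists_spanning_basis (eval_rows Fol v x).
have k_le : (k <= dF)%N by rewrite -(spanning_basis_rank M_basis) rank_leq_col.
have dimE := has_dim_I_fol_capE hFol.1 x_pt M_basis v_free v_span.
rewrite -(rank_leq_iff_word_minors x_pt M_basis).
split=> [[d [/dimE -> ]]|kr]; first by rewrite subKn.
by exists (dF - k)%N; rewrite subKn //; split=> //; apply/dimE.
Qed.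

Theorem mainTheorem9 (R : realType) (A : comAlgType R[i])
  (hA : irred_affine_coord_ring A)
  (Fol : (A -> A) -> Prop) (hFol : is_foliation Fol)
  (F : A -> Prop) (hF : is_subspace F) (dF : nat) (hdF : has_dim F dF)
  (r : nat) :
  zariski_closed (fun x : A -> R[i] =>
    exists d : nat, has_dim (fun f => I_fol Fol x f /\ F f) d /\ (dF - d <= r)%N).
Proof. exact: (@zariski_closed_I_fol_codim_le _ A Fol hFol F dF hdF r). Qed.
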